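(* Let $M>0$, $m\in\mathbb{R}$ and let $n\ge2$ be an integer. Let $\mathcal{H}$ be the set of functions $h:\mathbb{R}\to[0,\infty)$ such that: (i) the support of $h$ (closure of $\{h>0\}$) is an interval $[0,b]$ for some $b>0$; (ii) $h$ is continuous and concave on $[0,b]$; (iii) $h(0)=1$ and the right derivative of $h$ at $0$ is $\le m$; (iv) with $f:=h^{n-1}$, $\int_0^b t f(t)\,dt=M$. Then $\mathcal{H}\neq\emptyset$ if and only if $m\ge -1/\sqrt{Mn(n+1)}$. In that case, setting $\mu(h):=\int_0^b f(t)\,dt$ for $h\in\mathcal{H}$: the minimum of $\mu$ over $\mathcal{H}$ is attained, and it is attained exactly at those $h$ which are affine on their support $[0,b]$ with $h(b)=0$; the maximum of $\mu$ over $\mathcal{H}$ is attained, and it is attained exactly at those $h$ with $h(t)=1+mt$ for all $t$ in the support of $h$. *)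

From Stdlib Require Import Reals ClassicalEpsilon.
Open Scope R_scope.

Definition in_closure (S : R -> Prop) (x : R) : Prop :=
  forall eps, 0 < eps -> exists y, S y /\ Rabs (y - x) < eps.

Definition support_is (h : R -> R) (b : R) : Prop :=
  forall x, in_closure (fun y => 0 < h y) x <-> 0 <= x <= b.

Definition continuous_on (h : R -> R) (a b : R) : Prop :=
  forall x, a <= x <= b -> limit1_in h (fun y => a <= y <= b) (h x) x.

Definition concave_on (h : R -> R) (a b : R) : Prop :=
  forall x y l, a <= x <= b -> a <= y <= b -> 0 <= l <= 1 ->
    l * h x + (1 - l) * h y <= h (l * x + (1 - l) * y).

Definition right_deriv0_le (h : R -> R) (m : R) : Prop :=
  exists d, limit1_in (fun t => (h t - h 0) / t) (fun t => 0 < t) d 0 /\ d <= m.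

Definition integral_is (f : R -> R) (a b v : R) : Prop :=
  exists pr : Riemann_integrable f a b, RiemannInt pr = v.

(* Riemann integral as a total function (meaningful when f is integrable) *)
Definition Rint (f : R -> R) (a b : R) : R :=
  epsilon (inhabits 0) (fun v => integral_is f a b v).

Definition inH (M m : R) (n : nat) (h : R -> R) (b : R) : Prop :=
  0 < b /\
  (forall x, 0 <= h x) /\
  support_is h b /\
  continuous_on h 0 b /\
  concave_on h 0 b /\
  h 0 = 1 /\
  right_deriv0_le h m /\
  integral_is (fun t => t * h t ^ (n - 1)) 0 b M.

Definition mu (n : nat) (h : R -> R) (b : R) : R :=
  Rint (fun t => h t ^ (n - 1)) 0 b.

(* A member h of H with support [0,b] is concave with h 0 = 1, so it lies
   above its chords from (0,1) and below the line 1 + m t; it is positive on [0,b) and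
   vanishes outside.  Write F_h = h^(n-1).  For two members h, g and any T, since both
   have first moment M,
        int_0^L (T - t) (F_h - F_g) dt = T (mu h - mu g)     (L beyond both supports).
   So if the integrand is nonnegative and T mu h <= T mu g, it vanishes wherever it is
   continuous, and this forces h = g ([crossing_principle]).
   - Minimum: h crosses the triangle profile h0 = 1 - t/c at most once, at some T
     ([mem_crossing]); hence (T - t)(F_h - F_h0) >= 0, and mu h <= mu h0 gives h = h0.
   - Maximum: g = 1 + m t on [0,c] dominates h on [0,c], so (c - t)(F_g - F_h) >= 0.
   - Existence: a member lies below 1 + m t, which for m < 0 bounds its first moment by
     (1/m)^2 / (n (n+1)); the triangle profile with support b0 = sqrt(M n (n+1)) has first
     moment exactly M; a linear profile 1 + m t in H is found by the intermediate value
     theorem.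
   The file first collects real-analysis facts, then properties of members of H, the
   comparison principle with its consequences, the explicit extremizers, and lemma5. *)

From Stdlib Require Import Reals ClassicalEpsilon Lra Lia Classical FunctionalExtensionality.
From Coquelicot Require Import Coquelicot.
Open Scope R_scope.

Lemma pow_lt_nonneg (x y : R) (k : nat) : 0 <= x < y -> (1 <= k)%nat -> x ^ k < y ^ k.
Proof.
intros Hxy Hk. destruct k as [|k]; [lia|]. simpl.
assert (x ^ k <= y ^ k) by (apply pow_incr; lra).
assert (0 < y ^ k) by (apply pow_lt; lra).
assert (0 <= x ^ k) by (apply pow_le; lra).
nra.
Qed.

Lemma pow_inj_nonneg (x y : R) (k : nat) :
  0 <= x -> 0 <= y -> (1 <= k)%nat -> x ^ k = y ^ k -> x = y.
Proof.
intros Hx Hy Hk Heq. destruct (Rtotal_order x y) as [H|[H|H]]; auto.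
- pose proof (pow_lt_nonneg x y k (conj Hx H) Hk). lra.
- pose proof (pow_lt_nonneg y x k (conj Hy H) Hk). lra.
Qed.

Lemma exists_avoiding (u v p : R) : u < v -> exists y, u < y < v /\ y <> p.
Proof.
intros Huv. destruct (Req_dec ((u + v) / 2) p) as [E|E].
- exists ((u + 3 * v) / 4). split; lra.
- exists ((u + v) / 2). split; [lra|exact E].
Qed.

Lemma Rint_RInt (f : R -> R) (a b : R) : ex_RInt f a b -> Rint f a b = RInt f a b.
Proof.
intros Hex. unfold Rint.
destruct (epsilon_spec (inhabits 0) (fun v => integral_is f a b v)) as [pr Hpr].
- exists (RiemannInt (ex_RInt_Reals_0 _ _ _ Hex)). eexists. reflexivity.
- rewrite <- Hpr. symmetry. apply RInt_Reals.
Qed.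

Lemma continuity_pt_intro (f : R -> R) (x : R) :
  (forall eps, 0 < eps -> exists d, 0 < d /\
     forall y, Rabs (y - x) < d -> Rabs (f y - f x) < eps) ->
  continuity_pt f x.
Proof.
intros H eps Heps. destruct (H eps Heps) as [d [Hd Hy]].
exists d. split; [exact Hd|]. intros y [_ Hyd]. exact (Hy y Hyd).
Qed.

Lemma continuity_pt_elim (f : R -> R) (x : R) : continuity_pt f x ->
  forall eps, 0 < eps -> exists d, 0 < d /\
     forall y, Rabs (y - x) < d -> Rabs (f y - f x) < eps.
Proof.
intros H eps Heps. destruct (H eps Heps) as [d [Hd Hy]].
exists d. split; [exact Hd|]. intros y Hyd.
destruct (Req_dec x y) as [<-|ne].
- rewrite Rminus_diag, Rabs_R0. exact Heps.
- apply (Hy y). split; [split; [exact I|exact ne]|exact Hyd].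
Qed.

Lemma continuous_on_elim (f : R -> R) (a b x : R) : continuous_on f a b -> a <= x <= b ->
  forall eps, 0 < eps -> exists d, 0 < d /\
     forall y, a <= y <= b -> Rabs (y - x) < d -> Rabs (f y - f x) < eps.
Proof.
intros H Hx eps Heps. destruct (H x Hx eps Heps) as [d [Hd Hy]].
exists d. split; [exact Hd|]. intros y Hy1 Hy2. apply (Hy y). split; assumption.
Qed.

Lemma continuous_on_congr (f g : R -> R) (a b : R) :
  (forall t, a <= t <= b -> f t = g t) -> continuous_on g a b -> continuous_on f a b.
Proof.
intros Hfg Hg x Hx eps Heps. destruct (Hg x Hx eps Heps) as [d [Hd Hy]].
exists d. split; [exact Hd|]. intros y [Hy1 Hy2].
rewrite (Hfg y Hy1), (Hfg x Hx). apply Hy. split; assumption.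
Qed.

Lemma continuous_on_pow (f : R -> R) (a b : R) (k : nat) :
  continuous_on f a b -> continuous_on (fun t => f t ^ k) a b.
Proof.
intros Hf x Hx. induction k as [|k IH]; simpl.
- apply (limit_free (fun _ => 1) _ x x).
- apply (limit_mul f (fun t => f t ^ k)); [apply Hf, Hx|exact IH].
Qed.

Lemma continuous_on_interior (f : R -> R) (a b x : R) :
  continuous_on f a b -> a < x < b -> continuity_pt f x.
Proof.
intros Hf Hx. apply continuity_pt_intro. intros eps Heps.
destruct (continuous_on_elim f a b x Hf ltac:(lra) eps Heps) as [d [Hd Hy]].
exists (Rmin d (Rmin (x - a) (b - x))). split.
- repeat apply Rmin_glb_lt; lra.
- intros y Hyx. apply Rabs_def2 in Hyx as Hyx'.
  pose proof (Rmin_l d (Rmin (x - a) (b - x))). pose proof (Rmin_r d (Rmin (x - a) (b - x))).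
  pose proof (Rmin_l (x - a) (b - x)). pose proof (Rmin_r (x - a) (b - x)).
  apply Hy; lra.
Qed.

Lemma continuity_pt_vanishing (f : R -> R) (b x : R) :
  (forall t, b < t -> f t = 0) -> b < x -> continuity_pt f x.
Proof.
intros Hf Hx. apply continuity_pt_intro. intros eps Heps.
exists (x - b). split; [lra|]. intros y Hy. apply Rabs_def2 in Hy.
rewrite (Hf y), (Hf x) by lra. rewrite Rminus_diag, Rabs_R0. exact Heps.
Qed.

Lemma continuous_on_eq_except (f g : R -> R) (a b p : R) : a < b ->
  continuous_on f a b -> continuous_on g a b ->
  (forall t, a < t < b -> t <> p -> f t = g t) -> forall x, a <= x <= b -> f x = g x.
Proof.
intros Hab Hf Hg Heq x Hx. apply NNPP. intros Hne.
set (de := Rabs (f x - g x)).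
assert (Hde : 0 < de) by (apply Rabs_pos_lt; lra).
destruct (continuous_on_elim f a b x Hf Hx (de / 2)) as [d1 [Hd1 Hy1]]; [lra|].
destruct (continuous_on_elim g a b x Hg Hx (de / 2)) as [d2 [Hd2 Hy2]]; [lra|].
set (r := Rmin d1 d2).
assert (Hr : 0 < r) by (apply Rmin_glb_lt; assumption).
assert (r <= d1) by apply Rmin_l. assert (r <= d2) by apply Rmin_r.
destruct (exists_avoiding (Rmax a (x - r)) (Rmin b (x + r)) p) as [y [Hy Hyp]].
{ unfold Rmax, Rmin. destruct (Rle_dec a (x - r)); destruct (Rle_dec b (x + r)); lra. }
pose proof (Rmax_l a (x - r)). pose proof (Rmax_r a (x - r)).
pose proof (Rmin_l b (x + r)). pose proof (Rmin_r b (x + r)).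
assert (Hyx : Rabs (y - x) < r) by (apply Rabs_def1; lra).
specialize (Hy1 y ltac:(lra) ltac:(lra)). specialize (Hy2 y ltac:(lra) ltac:(lra)).
rewrite (Heq y ltac:(lra) Hyp) in Hy1.
assert (de <= Rabs (g y - f x) + Rabs (g y - g x)).
{ unfold de. replace (f x - g x) with (- (g y - f x) + (g y - g x)) by ring.
  eapply Rle_trans; [apply Rabs_triang|]. rewrite Rabs_Ropp. lra. }
lra.
Qed.

(* The 1-Lipschitz retraction of R onto [a,b]; composing with it extends a function
   continuous on [a,b] to a continuous function on R. *)
Definition clamp (a b t : R) : R := Rmax a (Rmin b t).

Lemma clamp_in (a b t : R) : a <= b -> a <= clamp a b t <= b.
Proof. intros Hab. unfold clamp, Rmax, Rmin. destruct (Rle_dec b t); destruct (Rle_dec a _); lra. Qed.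

Lemma clamp_id (a b t : R) : a <= t <= b -> clamp a b t = t.
Proof. intros Ht. unfold clamp, Rmax, Rmin. destruct (Rle_dec b t); destruct (Rle_dec a _); lra. Qed.

Lemma clamp_lipschitz (a b s t : R) : a <= b -> Rabs (clamp a b s - clamp a b t) <= Rabs (s - t).
Proof.
intros Hab. unfold clamp, Rmax, Rmin.
destruct (Rle_dec b s); destruct (Rle_dec b t);
repeat match goal with |- context [Rle_dec ?u ?v] => destruct (Rle_dec u v) end;
unfold Rabs; repeat match goal with |- context [Rcase_abs ?u] => destruct (Rcase_abs u) end; lra.
Qed.

Lemma ex_RInt_continuous_on (f : R -> R) (a b : R) :
  a <= b -> continuous_on f a b -> ex_RInt f a b.
Proof.
intros Hab Hf.
assert (Hcont : forall x, continuity_pt (fun t => f (clamp a b t)) x).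
{ intros x. apply continuity_pt_intro. intros eps Heps.
  destruct (continuous_on_elim f a b (clamp a b x) Hf (clamp_in a b x Hab) eps Heps)
    as [d [Hd Hy]].
  exists d. split; [exact Hd|]. intros y Hyx. apply Hy; [apply clamp_in, Hab|].
  pose proof (clamp_lipschitz a b y x Hab). lra. }
apply (ex_RInt_ext (fun t => f (clamp a b t))).
- intros t Ht. rewrite Rmin_left, Rmax_right in Ht by exact Hab.
  rewrite clamp_id by lra. reflexivity.
- apply (ex_RInt_continuous (V := R_CompleteNormedModule)).
  intros z _. apply continuity_pt_filterlim, Hcont.
Qed.

Lemma is_RInt_zero_tail (f : R -> R) (a b L v : R) : a <= b -> b <= L ->
  (forall t, b < t -> f t = 0) -> is_RInt f a b v -> is_RInt f a L v.
Proof.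
intros Hab HbL Hf Hv.
replace v with (plus v 0) by (change (v + 0 = v); ring).
apply (is_RInt_Chasles f a b L v 0 Hv).
apply (is_RInt_ext (fun _ => 0)).
- intros t Ht. rewrite Rmin_left, Rmax_right in Ht by exact HbL. rewrite Hf by lra. reflexivity.
- pose proof (is_RInt_const b L 0) as Hz.
  change (scal (L - b) 0) with ((L - b) * 0) in Hz. rewrite Rmult_0_r in Hz. exact Hz.
Qed.

Lemma zero_of_nonneg_integral (phi : R -> R) (a L I x : R) :
  is_RInt phi a L I -> I <= 0 -> (forall t, a < t < L -> 0 <= phi t) ->
  a < x < L -> continuity_pt phi x -> phi x = 0.
Proof.
intros HI HI0 Hpos Hx Hc. apply Rle_antisym; [|apply Hpos, Hx].
apply Rnot_lt_le. intros Hphi.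
destruct (continuity_pt_elim phi x Hc (phi x / 2)) as [r [Hr Hy]]; [lra|].
set (d := Rmin r (Rmin (x - a) (L - x)) / 2).
assert (0 < Rmin r (Rmin (x - a) (L - x))) by (repeat apply Rmin_glb_lt; lra).
pose proof (Rmin_l r (Rmin (x - a) (L - x))). pose proof (Rmin_r r (Rmin (x - a) (L - x))).
pose proof (Rmin_l (x - a) (L - x)). pose proof (Rmin_r (x - a) (L - x)).
assert (Hd : 0 < d /\ d < r /\ d < x - a /\ d < L - x) by (unfold d; lra).
assert (Hex : forall u v, a <= u <= v -> v <= L -> ex_RInt phi u v).
{ intros u v Hu Hv. apply (ex_RInt_Chasles_1 phi u v L); [lra|].
  apply (ex_RInt_Chasles_2 phi a u L); [lra|]. exists I. exact HI. }
assert (Hleft : 0 <= RInt phi a (x - d)).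
{ apply RInt_ge_0; [lra|apply Hex; lra|]. intros t Ht. apply Hpos. lra. }
assert (Hright : 0 <= RInt phi (x + d) L).
{ apply RInt_ge_0; [lra|apply Hex; lra|]. intros t Ht. apply Hpos. lra. }
assert (Hmid : RInt (fun _ => phi x / 2) (x - d) (x + d) <= RInt phi (x - d) (x + d)).
{ apply RInt_le; [lra|apply ex_RInt_const|apply Hex; lra|].
  intros t Ht. assert (Hty : Rabs (t - x) < r) by (apply Rabs_def1; lra).
  specialize (Hy t Hty). apply Rabs_def2 in Hy. lra. }
rewrite RInt_const in Hmid. change (scal _ _) with ((x + d - (x - d)) * (phi x / 2)) in Hmid.
pose proof (RInt_Chasles phi (x - d) (x + d) L ltac:(apply Hex; lra) ltac:(apply Hex; lra))
  as Hsplit1.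
pose proof (RInt_Chasles phi a (x - d) L ltac:(apply Hex; lra) ltac:(apply Hex; lra))
  as Hsplit2.
change (RInt phi (x - d) (x + d) + RInt phi (x + d) L = RInt phi (x - d) L) in Hsplit1.
change (RInt phi a (x - d) + RInt phi (x - d) L = RInt phi a L) in Hsplit2.
rewrite (is_RInt_unique phi a L I HI) in Hsplit2.
nra.
Qed.
Lemma triangle_moment (n : nat) (beta : R) : (1 <= n)%nat -> 0 < beta ->
  is_RInt (fun t => t * (1 + - / beta * t) ^ (n - 1)) 0 beta
          (beta ^ 2 / (INR n * INR (n + 1))).
Proof.
intros Hn Hb. destruct n as [|k]; [lia|].
replace (S k - 1)%nat with k by lia. rewrite Nat.add_1_r.
assert (Hk1 : INR (S k) <> 0) by (apply not_0_INR; lia).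
assert (Hk2 : INR (S (S k)) <> 0) by (apply not_0_INR; lia).
(* an antiderivative, in terms of u = 1 - t/beta *)
set (A := fun t => - beta ^ 2 * ((1 + - / beta * t) ^ (S k) / INR (S k)
                                 - (1 + - / beta * t) ^ (S (S k)) / INR (S (S k)))).
replace (beta ^ 2 / (INR (S k) * INR (S (S k)))) with (minus (A beta) (A 0)).
- apply (is_RInt_derive (V := R_CompleteNormedModule) A).
  + intros x _. unfold A. auto_derive; [exact I|].
    change (match k with 0%nat => 1 | S _ => INR k + 1 end) with (INR (S k)).
    rewrite S_INR in Hk2. field. repeat split; lra.
  + intros x _. apply (@ex_derive_continuous R_AbsRing R_NormedModule). auto_derive. exact I.
- change (A beta - A 0 = beta ^ 2 / (INR (S k) * INR (S (S k)))). unfold A.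
  replace (1 + - / beta * beta) with 0 by (field; lra).
  replace (1 + - / beta * 0) with 1 by ring.
  rewrite !pow_i, !pow1 by lia. rewrite (S_INR (S k)) in *. field. split; lra.
Qed.

Section Member.
Context {M m : R} {n : nat} {h : R -> R} {b : R}.
Hypothesis Hn : (2 <= n)%nat.
Hypothesis HH : inH M m n h b.

Lemma mem_b : 0 < b.
Proof. apply HH. Qed.

Lemma mem_nonneg (x : R) : 0 <= h x.
Proof. destruct HH as [_ [Hnn _]]. exact (Hnn x). Qed.

Lemma mem_0 : h 0 = 1.
Proof. destruct HH as [_ [_ [_ [_ [_ [H0 _]]]]]]. exact H0. Qed.

Lemma mem_cont : continuous_on h 0 b.
Proof. destruct HH as [_ [_ [_ [Hc _]]]]. exact Hc. Qed.

Lemma mem_outside (x : R) : ~ (0 <= x <= b) -> h x = 0.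
Proof.
intros Hx. destruct HH as [_ [Hnn [Hs _]]].
destruct (Rle_lt_or_eq_dec 0 (h x) (Hnn x)) as [Hp|He]; [|auto].
exfalso. apply Hx, Hs. intros eps Heps. exists x.
split; [exact Hp|]. rewrite Rminus_diag, Rabs_R0. exact Heps.
Qed.

Lemma mem_chord (s t : R) : 0 < s <= b -> 0 <= t <= s -> (t / s) * h s + (1 - t / s) <= h t.
Proof.
intros Hs Ht. destruct HH as [_ [_ [_ [_ [Hc [H0 _]]]]]].
assert (Hl : 0 <= t / s <= 1).
{ split; [apply Rdiv_le_0_compat; lra|].
  apply Rmult_le_reg_r with s; [lra|]. unfold Rdiv. rewrite Rmult_assoc, Rinv_l; lra. }
pose proof (Hc s 0 (t / s) ltac:(lra) ltac:(lra) Hl) as C.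
rewrite H0 in C. replace (t / s * s + (1 - t / s) * 0) with t in C by (field; lra). lra.
Qed.

(* h is positive on [0,b), being above the chord 1 - t/b. *)
Lemma mem_pos (t : R) : 0 <= t < b -> 0 < h t.
Proof.
intros Ht. pose proof mem_b as Hb.
pose proof (mem_chord b t ltac:(lra) ltac:(lra)) as C. pose proof (mem_nonneg b).
assert (t / b < 1).
{ apply Rmult_lt_reg_r with b; [lra|]. unfold Rdiv. rewrite Rmult_assoc, Rinv_l; lra. }
assert (0 <= t / b) by (apply Rdiv_le_0_compat; lra).
nra.
Qed.

(* The right derivative at 0 is at most m, so by concavity h lies below its tangent
   bound 1 + m t. *)
Lemma mem_upper (t : R) : 0 <= t <= b -> h t <= 1 + m * t.
Proof.
intros Ht. destruct (Req_dec t 0) as [->|Ht0].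
{ rewrite mem_0. lra. }
apply Rnot_lt_le. intros Hgt.
destruct HH as [_ [_ [_ [_ [_ [H0 [[d [Hlim Hdm]] _]]]]]]].
set (q := (h t - 1) / t).
assert (Hq : m < q).
{ unfold q. apply Rmult_lt_reg_r with t; [lra|].
  unfold Rdiv. rewrite Rmult_assoc, Rinv_l by lra. lra. }
destruct (Hlim (q - d)) as [r [Hr Ha]]; [lra|].
set (s := Rmin (r / 2) (t / 2)).
assert (Hs : 0 < s /\ s < t /\ s < r).
{ unfold s. pose proof (Rmin_l (r / 2) (t / 2)). pose proof (Rmin_r (r / 2) (t / 2)).
  repeat split; try lra. apply Rmin_glb_lt; lra. }
assert (Hslope : Rabs ((h s - h 0) / s - d) < q - d).
{ apply (Ha s). split; [lra|]. simpl. unfold Rdist. rewrite Rminus_0_r, Rabs_right; lra. }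
(* the chord slope (h s - 1)/s dominates the chord slope q at the farther point t *)
assert (Hqs : q <= (h s - 1) / s).
{ pose proof (mem_chord t s ltac:(lra) ltac:(lra)) as C. unfold q.
  apply (Rmult_le_reg_r (s * t)); [nra|].
  replace ((h t - 1) / t * (s * t)) with ((h t - 1) * s) by (field; lra).
  replace ((h s - 1) / s * (s * t)) with ((h s - 1) * t) by (field; lra).
  replace (s / t * h t + (1 - s / t)) with (1 + s * (h t - 1) / t) in C by (field; lra).
  assert (s * (h t - 1) / t * t = s * (h t - 1)) by (field; lra).
  nra. }
rewrite H0 in Hslope. apply Rabs_def2 in Hslope. lra.
Qed.

Lemma mem_crossing (s : R) : exists T, 0 <= T <= b /\
  (forall t, 0 <= t < T -> 1 + s * t <= h t) /\ (forall t, T < t <= b -> h t < 1 + s * t).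
Proof.
pose proof mem_b as Hb.
set (E := fun t => 0 <= t <= b /\ 1 + s * t <= h t).
assert (E0 : E 0) by (split; [lra|rewrite mem_0; lra]).
destruct (completeness E) as [T [HTub HTlub]].
{ exists b. intros t Et. apply Et. }
{ exists 0. exact E0. }
assert (HT : 0 <= T <= b) by (split; [apply HTub, E0|apply HTlub; intros t Et; apply Et]).
exists T. split; [exact HT|]. split.
- intros t Ht. destruct (classic (exists u, E u /\ t < u)) as [[u [[Hu Hhu] Htu]]|Hno].
  + pose proof (mem_chord u t ltac:(lra) ltac:(lra)) as C.
    assert (0 <= t / u) by (apply Rdiv_le_0_compat; lra).
    assert (t / u * (1 + s * u) <= t / u * h u) by (apply Rmult_le_compat_l; assumption).
    replace (1 + s * t) with (t / u * (1 + s * u) + (1 - t / u)) by (field; lra). lra.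
  + exfalso. assert (T <= t); [|lra].
    apply HTlub. intros u Eu. apply Rnot_lt_le. intros Hlt. apply Hno. exists u. auto.
- intros t Ht. apply Rnot_le_lt. intros Hle.
  assert (t <= T) by (apply HTub; split; [lra|exact Hle]). lra.
Qed.

Lemma mem_F_zero (t : R) : b < t -> h t ^ (n - 1) = 0.
Proof. intros Ht. rewrite mem_outside by lra. apply pow_i. lia. Qed.

Lemma mem_F_pos (t : R) : 0 <= t < b -> 0 < h t ^ (n - 1).
Proof. intros Ht. apply pow_lt, mem_pos, Ht. Qed.

Lemma mem_F_cont (x : R) : 0 < x -> x <> b -> continuity_pt (fun t => h t ^ (n - 1)) x.
Proof.
intros Hx Hxb. destruct (Rlt_or_le x b) as [Hl|Hl].
- apply (continuous_on_interior _ 0 b); [apply continuous_on_pow, mem_cont|lra].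
- apply (continuity_pt_vanishing _ b); [exact mem_F_zero|lra].
Qed.

Lemma mem_mass (L : R) : b <= L -> is_RInt (fun t => h t ^ (n - 1)) 0 L (mu n h b).
Proof.
intros HbL. pose proof mem_b as Hb.
assert (Hex : ex_RInt (fun t => h t ^ (n - 1)) 0 b)
  by (apply ex_RInt_continuous_on; [lra|apply continuous_on_pow, mem_cont]).
apply (is_RInt_zero_tail _ 0 b L); [lra|exact HbL|exact mem_F_zero|].
unfold mu. rewrite (Rint_RInt _ _ _ Hex). apply (RInt_correct (V := R_CompleteNormedModule)), Hex.
Qed.

Lemma mem_moment (L : R) : b <= L -> is_RInt (fun t => t * h t ^ (n - 1)) 0 L M.
Proof.
intros HbL. pose proof mem_b as Hb.
apply (is_RInt_zero_tail _ 0 b L); [lra|exact HbL| |].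
- intros t Ht. rewrite mem_F_zero by exact Ht. ring.
- destruct HH as [_ [_ [_ [_ [_ [_ [_ [pr Hpr]]]]]]]].
  rewrite <- Hpr. apply ex_RInt_Reals_aux_1.
Qed.

Lemma mem_weighted (T L : R) : b <= L ->
  is_RInt (fun t => (T - t) * h t ^ (n - 1)) 0 L (T * mu n h b - M).
Proof.
intros HbL.
refine (is_RInt_ext _ _ 0 L _ _
  (is_RInt_minus _ _ 0 L _ _ (is_RInt_scal _ 0 L T _ (mem_mass L HbL)) (mem_moment L HbL))).
intros t _. change (T * h t ^ (n - 1) - t * h t ^ (n - 1) = (T - t) * h t ^ (n - 1)). ring.
Qed.

Lemma mem_affine_vanishing :
  (exists a d, forall t, 0 <= t <= b -> h t = a * t + d) -> h b = 0 ->
  forall t, 0 <= t <= b -> h t = 1 + - / b * t.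
Proof.
intros [a [d Haff]] Hhb t Ht. pose proof mem_b as Hb.
assert (Hd : d = 1) by (pose proof (Haff 0 ltac:(lra)); rewrite mem_0 in *; lra).
assert (Ha : a = - / b).
{ pose proof (Haff b ltac:(lra)) as E. rewrite Hhb, Hd in E.
  apply Rmult_eq_reg_r with b; [|lra]. field_simplify; lra. }
rewrite Haff by exact Ht. rewrite Ha, Hd. ring.
Qed.

End Member.

Section Comparison.
Context {M m : R} {n : nat}.
Hypothesis Hn : (2 <= n)%nat.

(* If h^(n-1) and g^(n-1) agree on (0,+oo) up to three points, then the support of h
   is not longer than that of g (else g^(n-1) = 0 < h^(n-1) between them). *)
Lemma support_le (h g : R -> R) (b c T : R) : inH M m n h b -> inH M m n g c ->
  (forall t, 0 < t -> t <> b -> t <> c -> t <> T -> h t ^ (n - 1) = g t ^ (n - 1)) ->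
  b <= c.
Proof.
intros HH HG Hagree. apply Rnot_lt_le. intros Hcb.
pose proof (mem_b HG) as Hc.
destruct (exists_avoiding c b T Hcb) as [t [Ht HtT]].
specialize (Hagree t ltac:(lra) ltac:(lra) ltac:(lra) HtT).
rewrite (mem_F_zero Hn HG t) in Hagree by lra.
pose proof (mem_F_pos HH t ltac:(lra)). lra.
Qed.

(* Under the same agreement the members coincide: the supports by [support_le], the
   values by injectivity of powers on (0,b) and continuity on [0,b]. *)
Lemma members_identify (h g : R -> R) (b c T : R) : inH M m n h b -> inH M m n g c ->
  (forall t, 0 < t -> t <> b -> t <> c -> t <> T -> h t ^ (n - 1) = g t ^ (n - 1)) ->
  b = c /\ h = g.
Proof.
intros HH HG Hagree.
assert (Hbc : b = c).
{ apply Rle_antisym; [exact (support_le h g b c T HH HG Hagree)|].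
  apply (support_le g h c b T HG HH). intros t Ht Hc Hb HT. symmetry. apply Hagree; auto. }
subst c. split; [reflexivity|]. pose proof (mem_b HH) as Hb.
apply functional_extensionality. intros t.
destruct (classic (0 <= t <= b)) as [Ht|Ht].
- apply (continuous_on_eq_except h g 0 b T Hb (mem_cont HH) (mem_cont HG)); [|exact Ht].
  intros u Hu HuT. apply (pow_inj_nonneg _ _ (n - 1)).
  + apply (mem_nonneg HH).
  + apply (mem_nonneg HG).
  + lia.
  + apply Hagree; lra.
- rewrite (mem_outside HH t Ht), (mem_outside HG t Ht). reflexivity.
Qed.

(* Since both members have first moment M,
   int (T - t)(h^(n-1) - g^(n-1)) = T (mu h - mu g); if this integrand is nonnegative
   and T mu h <= T mu g, it vanishes off the discontinuities, forcing h = g. *)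
Lemma crossing_principle (h g : R -> R) (b c T : R) : inH M m n h b -> inH M m n g c ->
  (forall t, 0 < t -> 0 <= (T - t) * (h t ^ (n - 1) - g t ^ (n - 1))) ->
  T * mu n h b <= T * mu n g c -> b = c /\ h = g.
Proof.
intros HH HG Hsign Hmu.
set (L := Rmax b c). assert (b <= L) by apply Rmax_l. assert (c <= L) by apply Rmax_r.
pose proof (mem_b HH). pose proof (mem_b HG).
set (phi := fun t => (T - t) * h t ^ (n - 1) - (T - t) * g t ^ (n - 1)).
assert (Hphi : is_RInt phi 0 L ((T * mu n h b - M) - (T * mu n g c - M)))
  by exact (is_RInt_minus _ _ 0 L _ _ (mem_weighted Hn HH T L ltac:(lra))
                                         (mem_weighted Hn HG T L ltac:(lra))).
assert (Hzero : forall t, 0 < t < L -> t <> b -> t <> c -> phi t = 0).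
{ intros t Ht Htb Htc. apply (zero_of_nonneg_integral phi 0 L _ t Hphi); [lra| |exact Ht|].
  - intros u Hu. unfold phi. rewrite <- Rmult_minus_distr_l. apply Hsign. lra.
  - assert (Hlin : continuity_pt (fun u => T - u) t).
    { apply (continuity_pt_minus (fun _ => T) (fun u => u)).
      - apply continuity_pt_const. intros ? ?. reflexivity.
      - apply derivable_continuous_pt, derivable_pt_id. }
    apply (continuity_pt_minus (fun u => (T - u) * h u ^ (n - 1))
                               (fun u => (T - u) * g u ^ (n - 1)));
      apply (continuity_pt_mult (fun u => T - u)); try exact Hlin.
    + apply (mem_F_cont Hn HH); lra.
    + apply (mem_F_cont Hn HG); lra. }
apply (members_identify h g b c T HH HG). intros t Ht Htb Htc HtT.
destruct (Rlt_or_le t L) as [HtL|HtL].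
- specialize (Hzero t (conj Ht HtL) Htb Htc). unfold phi in Hzero.
  rewrite <- Rmult_minus_distr_l in Hzero.
  destruct (Rmult_integral _ _ Hzero) as [E|E]; lra.
- rewrite (mem_F_zero Hn HH), (mem_F_zero Hn HG) by lra. reflexivity.
Qed.

(* Minimality: a member h with mu h <= mu h0, where h0 is the triangle profile
   1 - t/c, equals h0.  Here T is the crossing point of h with 1 - t/c. *)
Lemma min_core (h h0 : R -> R) (b c : R) : inH M m n h b -> inH M m n h0 c ->
  (forall t, 0 <= t <= c -> h0 t = 1 + - / c * t) -> mu n h b <= mu n h0 c ->
  b = c /\ h = h0.
Proof.
intros HH H0 Hh0 Hmu. pose proof (mem_b HH) as Hb. pose proof (mem_b H0) as Hc.
destruct (mem_crossing HH (- / c)) as [T [HT [Habove Hbelow]]].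
apply (crossing_principle h h0 b c T HH H0); [|apply Rmult_le_compat_l; lra].
intros t Ht.
assert (Hline : forall u, 0 <= u <= c -> 0 <= 1 + - / c * u).
{ intros u Hu. rewrite <- Hh0 by exact Hu. apply (mem_nonneg H0). }
pose proof (pow_le _ (n - 1) (mem_nonneg HH t)). pose proof (pow_le _ (n - 1) (mem_nonneg H0 t)).
destruct (Rtotal_order t T) as [HtT|[->|HTt]].
- apply Rmult_le_pos; [lra|].
  destruct (Rle_or_lt t c) as [Htc|Htc].
  + rewrite Hh0 by lra.
    enough ((1 + - / c * t) ^ (n - 1) <= h t ^ (n - 1)) by lra.
    apply pow_incr. split; [apply Hline; lra|apply Habove; lra].
  + rewrite (mem_F_zero Hn H0) by exact Htc. lra.
- rewrite Rminus_diag, Rmult_0_l. lra.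
- replace ((T - t) * (h t ^ (n - 1) - h0 t ^ (n - 1)))
    with ((t - T) * (h0 t ^ (n - 1) - h t ^ (n - 1))) by ring.
  apply Rmult_le_pos; [lra|].
  destruct (Rle_or_lt t b) as [Htb|Htb].
  + (* below the line, which must then still be nonnegative: t < c *)
    pose proof (Hbelow t (conj HTt Htb)) as Hlow.
    assert (Htc : t < c).
    { apply Rnot_le_lt. intros Hct. pose proof (mem_nonneg HH t).
      assert (1 <= / c * t); [|lra].
      apply Rmult_le_reg_l with c; [lra|]. rewrite <- Rmult_assoc, Rinv_r; lra. }
    rewrite Hh0 by lra.
    enough (h t ^ (n - 1) <= (1 + - / c * t) ^ (n - 1)) by lra.
    apply pow_incr. split; [apply (mem_nonneg HH)|lra].
  + rewrite (mem_F_zero Hn HH) by exact Htb. lra.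
Qed.

(* Maximality: a member h with mu g <= mu h, where g = 1 + m t on its support [0,c],
   equals g.  Here the weight is c - t: g^(n-1) dominates h^(n-1) on [0,c]. *)
Lemma max_core (h g : R -> R) (b c : R) : inH M m n h b -> inH M m n g c ->
  (forall t, 0 <= t <= c -> g t = 1 + m * t) -> mu n g c <= mu n h b ->
  b = c /\ h = g.
Proof.
intros HH HG Hg Hmu. pose proof (mem_b HG) as Hc.
assert (Hsign : forall t, 0 < t -> 0 <= (c - t) * (g t ^ (n - 1) - h t ^ (n - 1))).
{ intros t Ht.
  pose proof (pow_le _ (n - 1) (mem_nonneg HH t)). pose proof (pow_le _ (n - 1) (mem_nonneg HG t)).
  destruct (Rle_or_lt t c) as [Htc|Htc].
  - apply Rmult_le_pos; [lra|].
    destruct (Rle_or_lt t b) as [Htb|Htb].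
    + enough (h t ^ (n - 1) <= g t ^ (n - 1)) by lra.
      apply pow_incr. rewrite Hg by lra.
      split; [apply (mem_nonneg HH)|apply (mem_upper HH); lra].
    + rewrite (mem_F_zero Hn HH) by exact Htb. lra.
  - rewrite (mem_F_zero Hn HG) by exact Htc. nra. }
destruct (crossing_principle g h c b c HG HH Hsign) as [-> ->];
  [apply Rmult_le_compat_l; lra|].
split; reflexivity.
Qed.

Lemma min_bound (h0 : R -> R) (c : R) : inH M m n h0 c ->
  (forall t, 0 <= t <= c -> h0 t = 1 + - / c * t) ->
  forall h b, inH M m n h b -> mu n h0 c <= mu n h b.
Proof.
intros H0 Hh0 h b HH. apply Rnot_lt_le. intros Hlt.
destruct (min_core h h0 b c HH H0 Hh0 ltac:(lra)) as [-> ->]. lra.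
Qed.

Lemma max_bound (g : R -> R) (c : R) : inH M m n g c ->
  (forall t, 0 <= t <= c -> g t = 1 + m * t) ->
  forall h b, inH M m n h b -> mu n h b <= mu n g c.
Proof.
intros HG Hg h b HH. apply Rnot_lt_le. intros Hlt.
destruct (max_core h g b c HH HG Hg ltac:(lra)) as [-> ->]. lra.
Qed.

(* Necessity: if m < 0, a member lies below the profile 1 + m t, whose support is
   [0, -1/m], so its first moment M is at most that of the profile. *)
Lemma moment_bound (h : R -> R) (b : R) : inH M m n h b -> m < 0 ->
  M <= (- / m) ^ 2 / (INR n * INR (n + 1)).
Proof.
intros HH Hm. pose proof (mem_b HH) as Hb.
set (c := - / m).
assert (Hc : 0 < c) by (unfold c; pose proof (Rinv_lt_0_compat m Hm); lra).
assert (Hmc : m = - / c) by (unfold c; field; lra).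
assert (Hline : forall t, 0 <= t <= c -> 0 <= 1 + m * t).
{ intros t Ht. rewrite Hmc.
  assert (/ c * t <= 1); [|lra].
  apply Rmult_le_reg_l with c; [lra|]. rewrite <- Rmult_assoc, Rinv_r; lra. }
assert (Hbc : b <= c).
{ pose proof (mem_upper HH b ltac:(lra)). pose proof (mem_nonneg HH b).
  assert (c * - m = 1) by (unfold c; field; lra).
  apply Rmult_le_reg_r with (- m); [lra|]. nra. }
pose proof (triangle_moment n c ltac:(lia) Hc) as Htri. rewrite <- Hmc in Htri.
apply (is_RInt_le _ _ 0 c _ _ ltac:(lra) (mem_moment Hn HH c Hbc) Htri).
intros t Ht. apply Rmult_le_compat_l; [lra|].
destruct (Rle_or_lt t b) as [Htb|Htb].
- apply pow_incr. split; [apply (mem_nonneg HH)|apply (mem_upper HH); lra].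
- rewrite (mem_F_zero Hn HH) by exact Htb. apply pow_le, Hline. lra.
Qed.

End Comparison.

Lemma support_intro (h : R -> R) (b : R) : 0 < b ->
  (forall x, ~ (0 <= x <= b) -> h x = 0) -> (forall x, 0 <= x < b -> 0 < h x) ->
  support_is h b.
Proof.
intros Hb Hz Hp x. split.
- intros Hcl. apply NNPP. intros Hx.
  (* a point outside [0,b] has a neighbourhood of radius dist(x,[0,b]) where h = 0 *)
  set (r := Rmax (- x) (x - b)).
  assert (Hr : 0 < r) by (unfold r, Rmax; destruct (Rle_dec (- x) (x - b)); lra).
  destruct (Hcl r Hr) as [y [Hy1 Hy2]].
  rewrite Hz in Hy1; [lra|]. intros Hy. apply Rabs_def2 in Hy2.
  unfold r, Rmax in Hy2. destruct (Rle_dec (- x) (x - b)); lra.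
- intros Hx eps Heps. destruct (Rlt_or_le x b) as [H|H].
  + exists x. split; [apply Hp; lra|]. rewrite Rminus_diag, Rabs_R0. lra.
  + exists (Rmax 0 (b - eps / 2)). pose proof (Rmax_l 0 (b - eps / 2)).
    pose proof (Rmax_r 0 (b - eps / 2)).
    assert (Rmax 0 (b - eps / 2) < b) by (unfold Rmax; destruct (Rle_dec 0 (b - eps / 2)); lra).
    split; [apply Hp; lra|]. apply Rabs_def1; lra.
Qed.

Definition profile (s c t : R) : R :=
  if Rle_dec 0 t then if Rle_dec t c then 1 + s * t else 0 else 0.

Lemma profile_in (s c t : R) : 0 <= t <= c -> profile s c t = 1 + s * t.
Proof. intros Ht. unfold profile. destruct (Rle_dec 0 t); [destruct (Rle_dec t c)|]; lra. Qed.

Lemma profile_out (s c t : R) : ~ (0 <= t <= c) -> profile s c t = 0.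
Proof. intros Ht. unfold profile. destruct (Rle_dec 0 t); [destruct (Rle_dec t c)|]; auto; lra. Qed.

Lemma profile_member (M m : R) (n : nat) (s c : R) : 0 < c -> s <= m -> 0 <= 1 + s * c ->
  is_RInt (fun t => t * (1 + s * t) ^ (n - 1)) 0 c M -> inH M m n (profile s c) c.
Proof.
intros Hc Hsm Hsc HI.
assert (Hpos : forall t, 0 <= t < c -> 0 < 1 + s * t).
{ intros t Ht. destruct (Rle_or_lt 0 s) as [Hs|Hs]; [nra|].
  assert (s * c < s * t) by (apply Rmult_lt_gt_compat_neg_l; lra). lra. }
assert (Hin : forall t, 0 <= t < c -> 0 < profile s c t)
  by (intros t Ht; rewrite profile_in by lra; apply Hpos, Ht).
split; [exact Hc|]. split.
{ intros x. destruct (classic (0 <= x <= c)) as [Hx|Hx].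
  - destruct (Req_dec x c) as [->|Hxc]; [rewrite profile_in; lra|].
    apply Rlt_le, Hin. lra.
  - rewrite profile_out by exact Hx. lra. }
split; [apply support_intro; [exact Hc|apply profile_out|exact Hin]|].
split.
{ apply (continuous_on_congr _ (fun t => 1 + s * t)); [exact (profile_in s c)|].
  intros x Hx. apply limit_plus; [apply (limit_free (fun _ => 1) _ x x)|].
  apply limit_mul; [apply (limit_free (fun _ => s) _ x x)|apply lim_x]. }
split.
{ intros x y l Hx Hy Hl. rewrite !profile_in by (auto || nra). right. ring. }
split; [rewrite profile_in by lra; ring|].
split.
{ exists s. split; [|exact Hsm]. intros eps Heps. exists c. split; [lra|].
  intros t [Ht1 Ht2]. simpl in *. unfold Rdist in *.
  rewrite Rminus_0_r, Rabs_right in Ht2 by lra.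
  rewrite !profile_in by lra. replace ((1 + s * t - (1 + s * 0)) / t - s) with 0 by (field; lra).
  rewrite Rabs_R0. lra. }
assert (HI' : is_RInt (fun t => t * profile s c t ^ (n - 1)) 0 c M).
{ apply (is_RInt_ext (fun t => t * (1 + s * t) ^ (n - 1))); [|exact HI].
  intros t Ht. rewrite Rmin_left, Rmax_right in Ht by lra. rewrite profile_in by lra. reflexivity. }
exists (ex_RInt_Reals_0 _ _ _ (ex_intro _ M HI')).
rewrite <- RInt_Reals. apply is_RInt_unique, HI'.
Qed.

(* The support length b0 of the triangle profile whose first moment is M. *)
Definition critical_support (M : R) (n : nat) : R := sqrt (M * INR n * INR (n + 1)).

Section Witnesses.
Context {M m : R} {n : nat}.
Hypothesis HM : 0 < M.
Hypothesis Hn : (2 <= n)%nat.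

Lemma critical_support_pos : 0 < critical_support M n.
Proof.
apply sqrt_lt_R0. rewrite Rmult_assoc.
apply Rmult_lt_0_compat; [exact HM|]. apply Rmult_lt_0_compat; apply lt_0_INR; lia.
Qed.

Lemma critical_support_moment : critical_support M n ^ 2 / (INR n * INR (n + 1)) = M.
Proof.
assert (INR n <> 0) by (apply not_0_INR; lia). assert (INR (n + 1) <> 0) by (apply not_0_INR; lia).
unfold critical_support. rewrite pow2_sqrt; [field; auto|].
rewrite Rmult_assoc. apply Rmult_le_pos; [lra|]. apply Rmult_le_pos; apply pos_INR.
Qed.

(* Nonemptiness forces m >= -1/b0: a smaller slope leaves too little first moment. *)
Lemma slope_lower_bound (h : R -> R) (b : R) : inH M m n h b -> - / critical_support M n <= m.
Proof.
intros HH. pose proof critical_support_pos as Hb0. apply Rnot_lt_le. intros Hlt.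
assert (Hm : m < 0) by (pose proof (Rinv_0_lt_compat _ Hb0); lra).
assert (Hc : - / m < critical_support M n).
{ rewrite <- (Rinv_inv (critical_support M n)), <- Rinv_opp.
  apply Rinv_lt_contravar; [|lra]. apply Rmult_lt_0_compat; [apply Rinv_0_lt_compat, Hb0|lra]. }
assert (Hc0 : 0 < - / m) by (pose proof (Rinv_lt_0_compat m Hm); lra).
pose proof (moment_bound Hn h b HH Hm) as Hbound.
rewrite <- critical_support_moment in Hbound at 1.
assert (HN : 0 < / (INR n * INR (n + 1)))
  by (apply Rinv_0_lt_compat, Rmult_lt_0_compat; apply lt_0_INR; lia).
assert (Hsq : (- / m) ^ 2 < critical_support M n ^ 2) by (simpl; nra).
unfold Rdiv in Hbound. pose proof (Rmult_lt_compat_r _ _ _ HN Hsq). lra.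
Qed.

Lemma triangle_member : - / critical_support M n <= m ->
  inH M m n (profile (- / critical_support M n) (critical_support M n)) (critical_support M n).
Proof.
intros Hm. pose proof critical_support_pos as Hb0.
apply profile_member; [exact Hb0|exact Hm|right; field; lra|].
rewrite <- critical_support_moment at 2. apply triangle_moment; [lia|exact Hb0].
Qed.

(* Some profile 1 + m t belongs to H: its support c is found by the intermediate
   value theorem, the first moment growing from 0 (at c = 0) to at least M (at c = b0). *)
Lemma linear_member : - / critical_support M n <= m -> exists c, inH M m n (profile m c) c.
Proof.
intros Hm. pose proof critical_support_pos as Hb0. set (b0 := critical_support M n) in *.
set (f := fun t => t * (1 + m * t) ^ (n - 1)).
assert (Hf : forall x, continuous f x)
  by (intros x; apply (@ex_derive_continuous R_AbsRing R_NormedModule); unfold f; auto_derive; exact I).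
assert (Hex : forall u v, ex_RInt f u v)
  by (intros u v; apply (ex_RInt_continuous (V := R_CompleteNormedModule)); intros z _; apply Hf).
set (Phi := fun c => RInt f 0 c).
assert (HPhi : continuity Phi).
{ intros x. apply continuity_pt_filterlim.
  apply (continuous_RInt_1 (V := R_NormedModule) f 0 x Phi).
  apply filter_forall. intros z. apply (RInt_correct (V := R_CompleteNormedModule)), Hex. }
assert (HPhi0 : Phi 0 = 0) by (unfold Phi; rewrite RInt_point; reflexivity).
(* the profile 1 + m t dominates the triangle profile 1 - t/b0 on [0,b0] *)
assert (HPhib0 : M <= Phi b0).
{ pose proof (triangle_moment n b0 ltac:(lia) Hb0) as Htri.
  replace (b0 ^ 2 / (INR n * INR (n + 1))) with M in Htri
    by (symmetry; exact critical_support_moment).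
  apply (is_RInt_le _ f 0 b0 _ _ ltac:(lra) Htri);
    [apply (RInt_correct (V := R_CompleteNormedModule)), Hex|].
  intros t Ht. unfold f. apply Rmult_le_compat_l; [lra|]. apply pow_incr.
  assert (/ b0 * t < 1).
  { apply Rmult_lt_reg_l with b0; [lra|]. rewrite <- Rmult_assoc, Rinv_r; lra. }
  split; [lra|]. apply Rplus_le_compat_l, Rmult_le_compat_r; lra. }
destruct (IVT_gen Phi 0 b0 M HPhi) as [c [Hc HPhic]].
{ rewrite HPhi0, Rmin_left, Rmax_right by lra. lra. }
rewrite Rmin_left, Rmax_right in Hc by lra.
assert (Hc0 : 0 < c) by (destruct (Req_dec c 0) as [->|]; [rewrite HPhi0 in HPhic|]; lra).
exists c. apply profile_member; [exact Hc0|lra| |].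
- (* 1 + m c >= 1 - c/b0 >= 0 since c <= b0 *)
  assert (/ b0 * c <= 1).
  { apply Rmult_le_reg_l with b0; [lra|]. rewrite <- Rmult_assoc, Rinv_r; lra. }
  assert (- / b0 * c <= m * c) by (apply Rmult_le_compat_r; lra). lra.
- rewrite <- HPhic. apply (RInt_correct (V := R_CompleteNormedModule)), Hex.
Qed.

End Witnesses.

Theorem lemma5 (M m : R) (n : nat) (HM : 0 < M) (Hn : (2 <= n)%nat) :
  ((exists h b, inH M m n h b) <-> - / sqrt (M * INR n * INR (n + 1)) <= m) /\
  (- / sqrt (M * INR n * INR (n + 1)) <= m ->
     (* minimum attained, exactly at affine h vanishing at b *)
     (exists h b, inH M m n h b /\
        forall h' b', inH M m n h' b' -> mu n h b <= mu n h' b') /\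
     (forall h b, inH M m n h b ->
        ((forall h' b', inH M m n h' b' -> mu n h b <= mu n h' b') <->
         ((exists a c, forall t, 0 <= t <= b -> h t = a * t + c) /\ h b = 0))) /\
     (* maximum attained, exactly at h = 1 + m t on the support *)
     (exists h b, inH M m n h b /\
        forall h' b', inH M m n h' b' -> mu n h' b' <= mu n h b) /\
     (forall h b, inH M m n h b ->
        ((forall h' b', inH M m n h' b' -> mu n h' b' <= mu n h b) <->
         (forall t, 0 <= t <= b -> h t = 1 + m * t)))).
Proof.
change (sqrt (M * INR n * INR (n + 1))) with (critical_support M n).
pose proof (critical_support_pos HM Hn) as Hb0.
set (b0 := critical_support M n) in *.
split.
{ split.
  - intros [h [b HH]]. exact (slope_lower_bound HM Hn h b HH).
  - intros Hm. exists (profile (- / b0) b0), b0. exact (triangle_member HM Hn Hm). }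
intros Hm.
pose proof (triangle_member HM Hn Hm) as H0.
pose proof (profile_in (- / b0) b0) as Hh0.
destruct (linear_member HM Hn Hm) as [c HG].
pose proof (profile_in m c) as Hg.
split; [|split; [|split]].
- exists (profile (- / b0) b0), b0. split; [exact H0|exact (min_bound Hn _ _ H0 Hh0)].
- intros h b HH. split.
  + intros Hmin. destruct (min_core Hn h _ b b0 HH H0 Hh0 (Hmin _ _ H0)) as [-> ->].
    split; [exists (- / b0), 1; intros t Ht; rewrite Hh0 by exact Ht; ring|].
    rewrite Hh0 by lra. field. lra.
  + intros [Haff Hhb]. exact (min_bound Hn h b HH (mem_affine_vanishing HH Haff Hhb)).
- exists (profile m c), c. split; [exact HG|exact (max_bound Hn _ _ HG Hg)].
- intros h b HH. split.
  + intros Hmax. destruct (max_core Hn h _ b c HH HG Hg (Hmax _ _ HG)) as [-> ->]. exact Hg.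
  + intros Heq. exact (max_bound Hn h b HH Heq).
Qed.
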